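(* Let $\alpha\in[0,1]$ and set $\sigma=25\alpha+10$, $r=28-35\alpha$, $b=\frac{\alpha+8}{3}$, $\gamma=29\alpha-1$, $x_r=\sqrt{(8+\alpha)(9-2\alpha)}$, and $E_+=(x_r,x_r,x_r^2/b)=\big(\sqrt{(8+\alpha)(9-2\alpha)},\sqrt{(8+\alpha)(9-2\alpha)},27-6\alpha\big)$. Consider the controlled system $$\begin{aligned}\dot x(t)&=\sigma\,(y(t)-x(t)),\\ \dot y(t)&=r\,[x(t)-x(t-\tau)]-[x(t)z(t)-x(t-\tau)z(t-\tau)]+\gamma\,[y(t)-y(t-\tau)]-\sigma\,[y(t-\tau)-x_r],\\ \dot z(t)&=x(t)y(t)-b\,z(t),\end{aligned}$$ with delay $\tau=0$; that is, the ODE system $\dot x=\sigma(y-x)$, $\dot y=-\sigma(y-x_r)$, $\dot z=xy-bz$. Then, for every $\alpha\in[0,1]$, $E_+$ is a globally asymptotically stable equilibrium of this system.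
   Context: The system above is the generalized Lorenz system $\dot x=\sigma(y-x)$, $\dot y=rx-xz+\gamma y$, $\dot z=xy-bz$ to which the delayed feedback control $u=-rx(t-\tau)+x(t-\tau)z(t-\tau)-\gamma y(t-\tau)-\sigma[y(t-\tau)-x_r]$ has been added in the $y$-equation; $E_+$ is a nontrivial equilibrium of the uncontrolled system and an equilibrium of the controlled one. *)

From Stdlib Require Import Reals.
From Coquelicot Require Import Coquelicot.
Open Scope R_scope.

Definition sigma_p (a : R) : R := 25 * a + 10.
Definition r_p (a : R) : R := 28 - 35 * a.
Definition b_p (a : R) : R := (a + 8) / 3.
Definition gamma_p (a : R) : R := 29 * a - 1.
Definition x_r (a : R) : R := sqrt ((8 + a) * (9 - 2 * a)).

Definition Eplus_x (a : R) : R := x_r a.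
Definition Eplus_y (a : R) : R := x_r a.
Definition Eplus_z (a : R) : R := (x_r a) ^ 2 / b_p a.

(* Right-hand sides of the controlled system, with current state (x,y,z)
   and delayed state (xd,yd,zd) = (x,y,z)(t - tau). *)
Definition fx (a x y z xd yd zd : R) : R := sigma_p a * (y - x).
Definition fy (a x y z xd yd zd : R) : R :=
  r_p a * (x - xd) - (x * z - xd * zd) + gamma_p a * (y - yd)
  - sigma_p a * (yd - x_r a).
Definition fz (a x y z xd yd zd : R) : R := x * y - b_p a * z.

(* A (forward) solution of the controlled system with delay tau = 0:
   the delayed state equals the current state. *)
Definition is_solution0 (a : R) (x y z : R -> R) : Prop :=
  forall t, 0 <= t ->
    is_derive x t (fx a (x t) (y t) (z t) (x t) (y t) (z t)) /\
    is_derive y t (fy a (x t) (y t) (z t) (x t) (y t) (z t)) /\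
    is_derive z t (fz a (x t) (y t) (z t) (x t) (y t) (z t)).

Definition dist_E (a : R) (x y z : R -> R) (t : R) : R :=
  sqrt ((x t - Eplus_x a) ^ 2 + (y t - Eplus_y a) ^ 2 + (z t - Eplus_z a) ^ 2).

Definition is_equilibrium0 (a : R) : Prop :=
  let ex := Eplus_x a in let ey := Eplus_y a in let ez := Eplus_z a in
  fx a ex ey ez ex ey ez = 0 /\ fy a ex ey ez ex ey ez = 0 /\
  fz a ex ey ez ex ey ez = 0.

Definition GAS0 (a : R) : Prop :=
  is_equilibrium0 a /\
  (forall eps, 0 < eps -> exists delta, 0 < delta /\
     forall x y z, is_solution0 a x y z -> dist_E a x y z 0 < delta ->
       forall t, 0 <= t -> dist_E a x y z t < eps) /\
  (forall x y z, is_solution0 a x y z ->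
     is_lim (dist_E a x y z) p_infty 0).

(* In the error coordinates u = x - x_r, v = y - x_r, w = z - x_r^2/b the system reads
   u' = s (v - u), v' = - s v, w' = u v + x_r (u + v) - b w, with s = sigma >= 10 and
   b >= 8/3.  The (u, v)-block is linear and dissipative, so u^2 + v^2 never exceeds its
   initial value P0.  The quadratic coupling u v + x_r (u + v) is then dominated by
   (P0/2 + 4 x_r^2) (u^2 + v^2), and V = w^2 + (P0/2 + 4 x_r^2 + 1) (u^2 + v^2) obeys
   V' <= - V.  Hence the squared distance to E_+ decays like e^(-t), with a constant that
   is O(d0^2) for small initial distance d0, which gives both stability and attractivity. *)
From Stdlib Require Import Reals Lra.
From Coquelicot Require Import Coquelicot.
Open Scope R_scope.

Lemma is_derive_sqr (f : R -> R) (t l : R) :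
  is_derive f t l -> is_derive (fun s => f s ^ 2) t (2 * f t * l).
Proof.
intros Hf. replace (2 * f t * l) with (INR 2 * l * f t ^ Nat.pred 2) by (simpl; ring).
exact (is_derive_pow f 2 t l Hf).
Qed.

Lemma is_derive_sub_const (f : R -> R) (c t l : R) :
  is_derive f t l -> is_derive (fun s => f s - c) t l.
Proof.
intros Hf. replace l with (l - 0) by ring.
exact (is_derive_minus f (fun _ => c) t l 0 Hf (is_derive_const c t)).
Qed.

Lemma le_at_0_of_derive_nonpos (g dg : R -> R) :
  (forall t, 0 <= t -> is_derive g t (dg t)) ->
  (forall t, 0 <= t -> dg t <= 0) ->
  forall t, 0 <= t -> g t <= g 0.
Proof.
intros Hd Hle t Ht.
destruct (MVT_gen g 0 t dg) as [c [Hc Hmvt]].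
- intros s Hs. apply Hd. rewrite Rmin_left in Hs; lra.
- intros s Hs. apply continuity_pt_filterlim.
  apply (ex_derive_continuous (K := R_AbsRing) (V := R_NormedModule)).
  exists (dg s). apply Hd. rewrite Rmin_left in Hs; lra.
- rewrite Rmin_left, Rmax_right in Hc by lra.
  assert (dg c <= 0) by (apply Hle; lra).
  assert (dg c * (t - 0) <= 0) by (apply Rmult_le_0_r; lra).
  lra.
Qed.

Lemma mul_exp_le_of_derive_le_opp (g dg : R -> R) :
  (forall t, 0 <= t -> is_derive g t (dg t)) ->
  (forall t, 0 <= t -> dg t <= - g t) ->
  forall t, 0 <= t -> g t * exp t <= g 0.
Proof.
intros Hd Hle t Ht.
rewrite <- (Rmult_1_r (g 0)), <- exp_0.
apply (le_at_0_of_derive_nonpos (fun t => g t * exp t) (fun t => (dg t + g t) * exp t)); auto.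
- intros s Hs. rewrite Rmult_plus_distr_r.
  exact (is_derive_mult g exp s _ _ (Hd s Hs) (is_derive_exp s) Rmult_comm).
- intros s Hs. pose proof (exp_pos s). pose proof (Hle s Hs). nra.
Qed.

Lemma coupling_sqr_le (u v X M : R) :
  u ^ 2 + v ^ 2 <= M -> (u * v + X * (u + v)) ^ 2 <= (M / 2 + 4 * X ^ 2) * (u ^ 2 + v ^ 2).
Proof.
intros HM.
assert (Hsplit : (u * v + X * (u + v)) ^ 2 <= 2 * (u * v) ^ 2 + 2 * X ^ 2 * (u + v) ^ 2)
  by (pose proof (pow2_ge_0 (u * v - X * (u + v))); nra).
assert (Huv : 2 * (u * v) ^ 2 <= M / 2 * (u ^ 2 + v ^ 2)).
{ assert (Hamgm : 4 * (u * v) ^ 2 <= (u ^ 2 + v ^ 2) * (u ^ 2 + v ^ 2))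
    by (pose proof (pow2_ge_0 (u ^ 2 - v ^ 2)); nra).
  assert ((u ^ 2 + v ^ 2) * (u ^ 2 + v ^ 2) <= M * (u ^ 2 + v ^ 2))
    by (apply Rmult_le_compat_r; nra).
  lra. }
assert (Hsum : X ^ 2 * (u + v) ^ 2 <= X ^ 2 * (2 * (u ^ 2 + v ^ 2))).
{ apply Rmult_le_compat_l; [apply pow2_ge_0 | pose proof (pow2_ge_0 (u - v)); nra]. }
lra.
Qed.

Lemma lyapunov_rate_le (g u v w s b K : R) :
  2 <= s -> 1 <= b -> 0 <= K -> g ^ 2 <= (K - 1) * (u ^ 2 + v ^ 2) ->
  2 * w * (g - b * w) + K * (2 * u * (s * (v - u)) + 2 * v * - (s * v))
  <= - (w ^ 2 + K * (u ^ 2 + v ^ 2)).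
Proof.
intros Hs Hb HK Hg.
assert (Hyoung : 2 * w * g <= w ^ 2 + g ^ 2) by (pose proof (pow2_ge_0 (w - g)); nra).
assert (Hw : w ^ 2 <= b * w ^ 2) by (pose proof (pow2_ge_0 w); nra).
assert (Hdiss : K * (2 * u * (s * (v - u)) + 2 * v * - (s * v))
                <= - (2 * K * (u ^ 2 + v ^ 2))).
{ assert (Hq : 2 * u * (s * (v - u)) + 2 * v * - (s * v)
          = - (s * ((u - v) ^ 2 + u ^ 2 + v ^ 2))) by ring.
  rewrite Hq.
  assert (2 * (u ^ 2 + v ^ 2) <= s * ((u - v) ^ 2 + u ^ 2 + v ^ 2))
    by (pose proof (pow2_ge_0 (u - v)); nra).
  nra. }
assert (0 <= u ^ 2 + v ^ 2) by nra.
nra.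
Qed.

Section ErrorDynamics.

Variables (s b X : R) (u v w : R -> R).
Hypotheses (s_ge2 : 2 <= s) (b_ge1 : 1 <= b).
Hypothesis du : forall t, 0 <= t -> is_derive u t (s * (v t - u t)).
Hypothesis dv : forall t, 0 <= t -> is_derive v t (- (s * v t)).
Hypothesis dw : forall t, 0 <= t -> is_derive w t (u t * v t + X * (u t + v t) - b * w t).

Lemma uv_sqnorm_le_init t : 0 <= t -> u t ^ 2 + v t ^ 2 <= u 0 ^ 2 + v 0 ^ 2.
Proof.
apply (le_at_0_of_derive_nonpos (fun t => u t ^ 2 + v t ^ 2)
  (fun t => 2 * u t * (s * (v t - u t)) + 2 * v t * - (s * v t))).
- intros r Hr. exact (is_derive_plus _ _ _ _ _ (is_derive_sqr _ _ _ (du r Hr))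
    (is_derive_sqr _ _ _ (dv r Hr))).
- intros r _.
  assert (Hq : 2 * u r * (s * (v r - u r)) + 2 * v r * - (s * v r)
          = - (s * ((u r - v r) ^ 2 + u r ^ 2 + v r ^ 2))) by ring.
  rewrite Hq. pose proof (pow2_ge_0 (u r - v r)). pose proof (pow2_ge_0 (u r)).
  pose proof (pow2_ge_0 (v r)). nra.
Qed.

Let P0 := u 0 ^ 2 + v 0 ^ 2.
Let K := P0 / 2 + 4 * X ^ 2 + 1.

Lemma lyapunov_exp_decay t : 0 <= t ->
  (w t ^ 2 + K * (u t ^ 2 + v t ^ 2)) * exp t <= w 0 ^ 2 + K * P0.
Proof.
apply (mul_exp_le_of_derive_le_opp (fun t => w t ^ 2 + K * (u t ^ 2 + v t ^ 2))
  (fun t => 2 * w t * (u t * v t + X * (u t + v t) - b * w t)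
            + K * (2 * u t * (s * (v t - u t)) + 2 * v t * - (s * v t)))).
- intros r Hr. exact (is_derive_plus _ _ _ _ _ (is_derive_sqr _ _ _ (dw r Hr))
    (is_derive_scal _ _ K _ (is_derive_plus _ _ _ _ _ (is_derive_sqr _ _ _ (du r Hr))
      (is_derive_sqr _ _ _ (dv r Hr))))).
- intros r Hr.
  assert (HP0 : 0 <= P0)
    by (unfold P0; pose proof (pow2_ge_0 (u 0)); pose proof (pow2_ge_0 (v 0)); lra).
  pose proof (pow2_ge_0 X).
  apply lyapunov_rate_le; auto; [unfold K; lra|].
  replace (K - 1) with (P0 / 2 + 4 * X ^ 2) by (unfold K; ring).
  exact (coupling_sqr_le _ _ X P0 (uv_sqnorm_le_init r Hr)).
Qed.

Lemma error_sqnorm_exp_bound t : 0 <= t ->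
  (u t ^ 2 + v t ^ 2 + w t ^ 2) * exp t
  <= ((u 0 ^ 2 + v 0 ^ 2 + w 0 ^ 2) / 2 + 4 * X ^ 2 + 1) * (u 0 ^ 2 + v 0 ^ 2 + w 0 ^ 2).
Proof.
intros Ht.
set (N0 := u 0 ^ 2 + v 0 ^ 2 + w 0 ^ 2).
pose proof (pow2_ge_0 (u t)). pose proof (pow2_ge_0 (v t)).
pose proof (pow2_ge_0 (u 0)). pose proof (pow2_ge_0 (v 0)). pose proof (pow2_ge_0 (w 0)).
pose proof (pow2_ge_0 X). pose proof (exp_pos t).
assert (HK : 1 <= K) by (unfold K, P0; lra).
assert (Hlhs : (u t ^ 2 + v t ^ 2 + w t ^ 2) * exp t
               <= (w t ^ 2 + K * (u t ^ 2 + v t ^ 2)) * exp t).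
{ apply Rmult_le_compat_r; nra. }
assert (Hrhs : w 0 ^ 2 + K * P0 <= (N0 / 2 + 4 * X ^ 2 + 1) * N0).
{ assert (w 0 ^ 2 + K * P0 <= K * N0) by (unfold N0, P0 in *; nra).
  assert (K * N0 <= (N0 / 2 + 4 * X ^ 2 + 1) * N0)
    by (apply Rmult_le_compat_r; unfold K, N0, P0; lra).
  lra. }
pose proof (lyapunov_exp_decay t Ht). lra.
Qed.

End ErrorDynamics.

Lemma solution_dist_exp_bound a x y z : 0 <= a <= 1 -> is_solution0 a x y z ->
  forall t, 0 <= t -> dist_E a x y z t ^ 2 * exp t
    <= (dist_E a x y z 0 ^ 2 / 2 + 4 * x_r a ^ 2 + 1) * dist_E a x y z 0 ^ 2.
Proof.
intros Ha Hsol.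
assert (Hdist : forall t, dist_E a x y z t ^ 2
  = (x t - x_r a) ^ 2 + (y t - x_r a) ^ 2 + (z t - Eplus_z a) ^ 2).
{ intros t. apply pow2_sqrt.
  pose proof (pow2_ge_0 (x t - x_r a)). pose proof (pow2_ge_0 (y t - x_r a)).
  pose proof (pow2_ge_0 (z t - Eplus_z a)). lra. }
intros t Ht. rewrite !Hdist.
assert (HbZ : b_p a * Eplus_z a = x_r a * x_r a)
  by (unfold Eplus_z, b_p; field; lra).
apply (error_sqnorm_exp_bound (sigma_p a) (b_p a) (x_r a)
  (fun t => x t - x_r a) (fun t => y t - x_r a) (fun t => z t - Eplus_z a));
  auto; try (unfold sigma_p, b_p; lra); intros r Hr;
  destruct (Hsol r Hr) as [Hx [Hy Hz]]; apply is_derive_sub_const.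
- replace (sigma_p a * (y r - x_r a - (x r - x_r a)))
    with (fx a (x r) (y r) (z r) (x r) (y r) (z r)) by (unfold fx; ring). exact Hx.
- replace (- (sigma_p a * (y r - x_r a))) with (fy a (x r) (y r) (z r) (x r) (y r) (z r))
    by (unfold fy; ring). exact Hy.
- replace ((x r - x_r a) * (y r - x_r a) + x_r a * (x r - x_r a + (y r - x_r a))
           - b_p a * (z r - Eplus_z a)) with (fz a (x r) (y r) (z r) (x r) (y r) (z r))
    by (unfold fz; lra). exact Hz.
Qed.

Lemma exp_bound_stable (c eps : R) : 0 <= c -> 0 < eps ->
  exists delta, 0 < delta /\ forall D : R -> R,
    (forall t, 0 <= t -> D t ^ 2 * exp t <= (D 0 ^ 2 / 2 + c) * D 0 ^ 2) ->
    0 <= D 0 < delta -> forall t, 0 <= t -> D t < eps.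
Proof.
intros Hc Heps.
set (q := eps / (1 + c)).
assert (Hq : (1 + c) * q = eps) by (unfold q; field; lra).
assert (Hq0 : 0 < q) by (unfold q; apply Rdiv_lt_0_compat; lra).
exists (Rmin 1 q). split; [apply Rmin_glb_lt; lra|].
intros D Hbound [HD0 HD0lt] t Ht.
pose proof (Rmin_l 1 q). pose proof (Rmin_r 1 q).
assert (Hsmall : (D 0 ^ 2 / 2 + c) * D 0 ^ 2 < eps ^ 2).
{ assert (D 0 ^ 2 / 2 + c <= 1 + c) by nra.
  assert ((D 0 ^ 2 / 2 + c) * D 0 ^ 2 <= (1 + c) * D 0 ^ 2)
    by (apply Rmult_le_compat_r; [apply pow2_ge_0 | lra]).
  assert (D 0 ^ 2 < q ^ 2) by nra.
  nra. }
pose proof (exp_ineq1_le t). pose proof (pow2_ge_0 (D t)).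
assert (D t ^ 2 <= D t ^ 2 * exp t) by nra.
pose proof (Hbound t Ht). nra.
Qed.

Lemma exp_bound_is_lim (D : R -> R) (C : R) :
  (forall t, 0 <= t -> D t ^ 2 * exp t <= C) -> is_lim D p_infty 0.
Proof.
intros Hbound.
apply is_lim_spec. intros ep.
pose proof (cond_pos ep) as Hep.
exists (Rmax 0 (C / ep ^ 2)). intros t Ht.
pose proof (Rmax_l 0 (C / ep ^ 2)). pose proof (Rmax_r 0 (C / ep ^ 2)).
assert (Hep2 : 0 < ep ^ 2) by (apply pow_lt; lra).
assert (HtC : C / ep ^ 2 < t) by lra.
assert (HC : C < ep ^ 2 * t).
{ apply (Rmult_lt_compat_l (ep ^ 2)) in HtC; [|exact Hep2].
  replace (ep ^ 2 * (C / ep ^ 2)) with C in HtC by (field; lra). exact HtC. }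
assert (Hsq : D t ^ 2 < ep ^ 2).
{ pose proof (exp_ineq1_le t). pose proof (pow2_ge_0 (D t)).
  pose proof (Hbound t ltac:(lra)). nra. }
rewrite Rminus_0_r. apply Rabs_def1; nra.
Qed.

Theorem theorem1 : forall a : R, 0 <= a <= 1 -> GAS0 a.
Proof.
intros a Ha.
assert (Hc : 0 <= 4 * x_r a ^ 2 + 1) by (pose proof (pow2_ge_0 (x_r a)); lra).
split; [|split].
- unfold is_equilibrium0, fx, fy, fz, Eplus_x, Eplus_y, Eplus_z, b_p.
  split; [ring|split; [ring|field; lra]].
- intros eps Heps.
  destruct (exp_bound_stable _ eps Hc Heps) as [delta [Hdelta Hstable]].
  exists delta. split; [exact Hdelta|].
  intros x y z Hsol H0.
  apply Hstable; [|split; [apply sqrt_pos | exact H0]].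
  intros t Ht. rewrite <- Rplus_assoc. exact (solution_dist_exp_bound a x y z Ha Hsol t Ht).
- intros x y z Hsol.
  exact (exp_bound_is_lim _ _ (solution_dist_exp_bound a x y z Ha Hsol)).
Qed.
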